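(* Let $\Sigma$ be a labeled graph over $\mathcal B$, let $\alpha\in\mathrm{Aut}(F(\mathcal B))$, and let $\sigma$ be an immersed edge path in $\alpha\Sigma$. Then there are an immersed edge path $\hat\sigma=e_0\cdots e_m$ in $\Sigma$, an initial edge subpath $\sigma_0$ of $\alpha(e_0)$, and a terminal edge subpath $\sigma_m$ of $\alpha(e_m)$ such that $\sigma_0\neq\alpha(e_0)$, $\sigma_m\neq\alpha(e_m)$, and $\alpha(\hat\sigma)$ is the immersed edge path $\sigma_0\sigma\sigma_m$.
   Context: $F(\mathcal B)$ is the free group on the finite set $\mathcal B$. A labeled graph assigns to each oriented edge a label in $\mathcal B^{\pm1}$, with $e^{-1}$ carrying the inverse label. For $\alpha\in\mathrm{Aut}(F(\mathcal B))$, the labeled graph $\alpha\Sigma$ is obtained from $\Sigma$ by replacing each oriented edge $e$ with label $c$ by a path $\alpha(e)$ of $k$ subedges, where $\alpha(c)$ is the reduced word $c_1^{\delta_1}\cdots c_k^{\delta_k}$ ($c_i\in\mathcal B$, $\delta_i=\pm1$), the $i$-th subedge being labeled $c_i$ and oriented along $e$ if $\delta_i=1$ and oppositely otherwise; $\alpha$ of an edge path is the concatenation of the $\alpha(e_i)$. An edge path is a sequence of oriented edges $e_0\cdots e_m$ with $\partial_1e_{i-1}=\partial_0e_i$; it is immersed if no $e_{i}=e_{i-1}^{-1}$. *)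

From mathcomp Require Import all_boot.
Set Implicit Arguments. Unset Strict Implicit. Unset Printing Implicit Defensive.

(* A letter (b, s) : B * bool stands for b if s = false and b^{-1} if s = true. *)
Definition letter (B : finType) := (B * bool)%type.
Definition linv (B : finType) (x : letter B) : letter B := (x.1, ~~ x.2).

Definition reduced (B : finType) (w : seq (letter B)) : bool :=
  sorted (fun x y => y != linv x) w.

Fixpoint freduce (B : finType) (w : seq (letter B)) : seq (letter B) :=
  match w with
  | [::] => [::]
  | x :: w' =>
      match freduce w' with
      | [::] => [:: x]
      | y :: r' => if y == linv x then r' else x :: y :: r'
      end
  end.

Lemma freduce_reduced (B : finType) (w : seq (letter B)) : reduced (freduce w).
Proof.
elim: w => [|x w IH] //=.
move: IH; case: (freduce w) => [|y r'] //= IH.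
case: ifP => [_|/negbT hy]; first by move: IH; rewrite /reduced /=; apply: path_sorted.
by rewrite /reduced /= hy.
Qed.

Definition FG (B : finType) := {w : seq (letter B) | reduced w}.
Definition fmul (B : finType) (u v : FG B) : FG B :=
  exist _ (freduce (proj1_sig u ++ proj1_sig v)) (freduce_reduced _).

Definition is_aut (B : finType) (alpha : FG B -> FG B) : Prop :=
  (forall u v, alpha (fmul u v) = fmul (alpha u) (alpha v)) /\ bijective alpha.

Definition gen (B : finType) (c : letter B) : FG B := exist _ [:: c] isT.
Definition aword (B : finType) (alpha : FG B -> FG B) (c : letter B)
  : seq (letter B) := proj1_sig (alpha (gen c)).

Record lgraph (B : finType) := LGraph {
  vtx : Type;
  edg : Type;
  einv : edg -> edg;
  esrc : edg -> vtx;
  elab : edg -> letter B }.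

Definition etgt (B : finType) (G : lgraph B) (e : edg G) : vtx G :=
  esrc (einv e).

Definition is_lgraph (B : finType) (G : lgraph B) : Prop :=
  [/\ forall e : edg G, einv (einv e) = e,
      forall e : edg G, einv e <> e
    & forall e : edg G, elab (einv e) = linv (elab e)].

Fixpoint chain (B : finType) (G : lgraph B) (p : seq (edg G)) : Prop :=
  match p with
  | e :: ((f :: _) as q) => [/\ etgt e = esrc f, f <> einv e & chain q]
  | _ => True
  end.
Definition immersed (B : finType) (G : lgraph B) (p : seq (edg G)) : Prop :=
  p <> [::] /\ chain p.

(* Every geometric edge of Sigma is represented by its unique orientation e
   with positive label b = (elab e).1; it is subdivided into k = |alpha(b)|
   subedges (e, i), i < k.  The oriented edge (e, i, false) traverses the
   i-th subedge in the direction of e, (e, i, true) in the opposite one.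
   Traversed along e the i-th subedge reads the i-th letter c_i^{delta_i}
   of alpha(b) (this is the labelling "c_i, oriented along e iff delta_i=1").
   Subdivision vertices are (e, j), 0 < j < k. *)
Section AlphaGraph.
Variables (B : finType) (alpha : FG B -> FG B) (S : lgraph B).

Definition posl (e : edg S) : bool := ~~ (elab e).2.
Definition kk (e : edg S) : nat := size (aword alpha ((elab e).1, false)).

Definition aedge_ok (t : edg S * nat * bool) : bool :=
  posl t.1.1 && (t.1.2 < kk t.1.1).
Definition aedge := {t : edg S * nat * bool | aedge_ok t}.

Definition aedge_inv (s : aedge) : aedge :=
  let: exist (e, i, d) h := s in exist aedge_ok (e, i, ~~ d) h.

Definition aedge_src (s : aedge) : (vtx S + (edg S * nat))%type :=
  let: (e, i, d) := proj1_sig s in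
  if ~~ d then (if i == 0 then inl (esrc e) else inr (e, i))
  else (if i.+1 == kk e then inl (etgt e) else inr (e, i.+1)).

Definition aedge_lab (s : aedge) : letter B :=
  let: (e, i, d) := proj1_sig s in
  let c := nth (elab e) (aword alpha ((elab e).1, false)) i in
  if d then linv c else c.

Definition alphaG : lgraph B :=
  @LGraph B (vtx S + (edg S * nat))%type aedge aedge_inv aedge_src aedge_lab.

(* alpha(e) for an oriented edge e of Sigma, as the list of its subedges
   in alpha Sigma (given by their underlying triples) *)
Definition alpha_edge (e : edg S) : seq (edg S * nat * bool) :=
  if posl e then [seq (e, i, false) | i <- iota 0 (kk e)]
  else [seq (einv e, i, true) | i <- rev (iota 0 (kk (einv e)))].

Definition alpha_path (p : seq (edg S)) : seq (edg S * nat * bool) :=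
  flatten [seq alpha_edge e | e <- p].

End AlphaGraph.

From mathcomp Require Import all_boot zify.
Set Implicit Arguments. Unset Strict Implicit. Unset Printing Implicit Defensive.

(* Every subedge of [alpha Sigma] lies on the image [alpha e] of exactly one oriented edge [e]
   of [Sigma]; these images are nonempty because [alpha] is injective.  Read an immersed path
   [sigma] of [alpha Sigma] backwards.  A subedge entering the interior of the image of the
   current first edge [e0] must be the preceding subedge of [alpha e0], since subdivision
   vertices have degree two.  A subedge reaching an original vertex ends the image of a new
   edge, which we prepend; it is not [e0^-1], for otherwise [sigma] would backtrack.  Finally
   the image of an immersed path is immersed, hence so is [sigma0 sigma sigmam]. *)

Lemma all_take (T : Type) (a : pred T) n (s : seq T) : all a s -> all a (take n s).
Proof. by rewrite -{1}(cat_take_drop n s) all_cat => /andP[]. Qed.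

Lemma all_drop (T : Type) (a : pred T) n (s : seq T) : all a s -> all a (drop n s).
Proof. by rewrite -{1}(cat_take_drop n s) all_cat => /andP[]. Qed.

Lemma freduce_id (B : finType) (w : seq (letter B)) : reduced w -> freduce w = w.
Proof.
elim: w => [|x w IH] //= w_red.
rewrite IH; last exact: path_sorted w_red.
by case: w w_red {IH} => [|y w] // /andP[/negbTE-> _].
Qed.

Definition fone (B : finType) : FG B := exist _ [::] isT.

Lemma fmul1g (B : finType) (u : FG B) : fmul (fone B) u = u.
Proof. by apply: val_inj; rewrite /= freduce_id //; exact: valP. Qed.

Lemma fmulg1 (B : finType) (u : FG B) : fmul u (fone B) = u.
Proof. by apply: val_inj; rewrite /= cats0 freduce_id //; exact: valP. Qed.

Lemma aut_fone (B : finType) (alpha : FG B -> FG B) :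
  is_aut alpha -> alpha (fone B) = fone B.
Proof.
move=> [alphaM [beta alphaK betaK]].
by have := alphaM (beta (fone B)) (fone B); rewrite fmulg1 betaK fmul1g.
Qed.

Lemma size_aword_gt0 (B : finType) (alpha : FG B -> FG B) (c : letter B) :
  is_aut alpha -> 0 < size (aword alpha c).
Proof.
move=> alpha_aut; rewrite lt0n size_eq0; apply/eqP => alpha_c.
have alpha_inj : injective alpha by case: alpha_aut => _ /bij_inj.
have : alpha (gen c) = alpha (fone B).
  by rewrite aut_fone //; apply: val_inj; rewrite /= -alpha_c.
by move/alpha_inj/(congr1 val).
Qed.

Section Chains.
Variables (B : finType) (G : lgraph B).

Definition link (e f : edg G) : Prop := etgt e = esrc f /\ f <> einv e.

Lemma chain_cons2 (e f : edg G) p :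
  chain [:: e, f & p] <-> link e f /\ chain (f :: p).
Proof. by split=> [[? ? ?]|[[? ?] ?]]. Qed.

Lemma chain_nthP (x0 : edg G) p :
  chain p <-> forall i, i.+1 < size p -> link (nth x0 p i) (nth x0 p i.+1).
Proof.
elim: p => [|e [|f p] IH] //.
split=> [/chain_cons2[ef /IH fp] [|i] // ?|ep]; first exact: fp.
apply/chain_cons2; split; first exact: (ep 0).
by apply/IH => i; exact: (ep i.+1).
Qed.

Lemma chain_cat p (a b : edg G) q :
  chain (rcons p a) -> link a b -> chain (b :: q) -> chain (rcons p a ++ b :: q).
Proof.
elim: p => [|e p IH]; first by move=> _ ab bq; apply/chain_cons2.
by case: p IH => [|f p] IH /chain_cons2[ex xp] ab bq; apply/chain_cons2; split=> //;
  exact: IH.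
Qed.

End Chains.

Lemma chain_map (B : finType) (G H : lgraph B)
    (f : edg G -> edg H) (g : vtx G -> vtx H) :
  injective f -> injective g -> {morph f : e / einv e} ->
  (forall e, esrc (f e) = g (esrc e)) ->
  forall p, chain (map f p) <-> chain p.
Proof.
move=> f_inj g_inj fV fsrc.
have flink e e' : link (f e) (f e') <-> link e e'.
  rewrite /link /etgt -fV !fsrc; split=> [[/g_inj ? ne]|[-> ne]]; split=> //.
    by move=> ee'; apply: ne; rewrite ee'.
  by move/f_inj.
elim=> [|e [|e' p] IH] //.
by split=> /chain_cons2[ee' e'p]; apply/chain_cons2; split; apply/flink || apply/IH.
Qed.

Section Subdivision.
Variables (B : finType) (alpha : FG B -> FG B) (S : lgraph B).
Hypothesis S_lgraph : is_lgraph S.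
Hypothesis kk_gt0 : forall e : edg S, 0 < kk alpha e.

Local Notation k := (kk alpha).
Local Notation triple := (edg S * nat * bool)%type.

Definition tinv (t : triple) : triple := let: (e, i, d) := t in (e, i, ~~ d).

Definition tsrc (t : triple) : (vtx S + (edg S * nat))%type :=
  let: (e, i, d) := t in
  if ~~ d then (if i == 0 then inl (esrc e) else inr (e, i))
  else (if i.+1 == k e then inl (etgt e) else inr (e, i.+1)).

(* [alphaG alpha S] without the constraint [aedge_ok] on its edges. *)
Definition tgraph : lgraph B := LGraph tinv tsrc (fun t : triple => elab t.1.1).

Definition orient (e : edg S) (d : bool) : edg S := if d then einv e else e.
Definition parent (t : triple) : edg S := orient t.1.1 t.2.
Definition pos (t : triple) : nat := if t.2 then (k t.1.1).-1 - t.1.2 else t.1.2.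

Variant orient_spec : edg S -> Prop :=
  OrientSpec e d of posl e : orient_spec (orient e d).

Lemma orientP e : orient_spec e.
Proof.
have [einvK _ elabV] := S_lgraph.
case pe: (posl e); first exact: (@OrientSpec e false).
rewrite -[e]einvK; apply: (@OrientSpec (einv e) true).
by rewrite /posl elabV /= -/(posl e) pe.
Qed.

Lemma einv_orient e d : einv (orient e d) = orient e (~~ d).
Proof. by case: d => //; case: S_lgraph => /= ->. Qed.

Lemma alpha_edge_orient e d : posl e ->
  alpha_edge alpha (orient e d) =
    mkseq (fun p => (e, if d then (k e).-1 - p else p, d)) (k e).
Proof.
move=> pe; rewrite /alpha_edge; case: d => /=; last by rewrite pe.
have [einvK _ elabV] := S_lgraph.
rewrite /posl elabV /= einvK -/(posl e) pe /=.
apply: (@eq_from_nth _ (e, 0, true)).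
  by rewrite size_map size_rev size_iota size_mkseq.
move=> p; rewrite size_map size_rev size_iota => lt_p_k.
rewrite (nth_map 0) ?size_rev ?size_iota // nth_rev ?size_iota // nth_mkseq //.
by rewrite nth_iota; [congr (_, _, _) | ]; lia.
Qed.

Local Notation AE := (@alpha_edge B alpha S).
Local Notation tlink := (link (G := tgraph)).
Local Notation ok := (@aedge_ok B alpha S).

Lemma size_alpha_edge_gt0 (e : edg S) : 0 < size (AE e).
Proof. by case: (orientP e) => e' d pe; rewrite alpha_edge_orient // size_mkseq. Qed.

Lemma parent_nth_alpha_edge (x0 : triple) (e : edg S) p :
  p < size (AE e) -> parent (nth x0 (AE e) p) = e.
Proof.
case: (orientP e) => e' d pe.
by rewrite alpha_edge_orient // size_mkseq => ?; rewrite nth_mkseq.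
Qed.

Lemma alpha_edge_ok (e : edg S) : all ok (AE e).
Proof.
case: (orientP e) => e' d pe; rewrite alpha_edge_orient // all_map.
by apply/allP => p; rewrite mem_iota /aedge_ok /= pe /=; have := kk_gt0 e'; case: d; lia.
Qed.

Lemma tsrc_head_alpha_edge (x0 : triple) (e : edg S) :
  tsrc (head x0 (AE e)) = inl (esrc e).
Proof.
case: (orientP e) => e' d pe; have k_gt0 := kk_gt0 e'.
rewrite alpha_edge_orient // -nth0 nth_mkseq //=.
by case: d => //=; rewrite subn0 prednK // eqxx.
Qed.

Lemma tsrc_nth_alpha_edge (x0 : triple) (e : edg S) p :
  0 < p -> p < size (AE e) -> exists v, tsrc (nth x0 (AE e) p) = inr v.
Proof.
case: (orientP e) => e' d pe; rewrite alpha_edge_orient // size_mkseq => p_gt0 lt_p_k.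
rewrite nth_mkseq //; case: d => /=; eexists.
  by have -> : ((k e').-1 - p).+1 == k e' = false by apply/eqP; lia.
by rewrite eqn0Ngt p_gt0.
Qed.

Lemma head_alpha_edge_einv (x0 : triple) (e : edg S) :
  head x0 (AE (einv e)) = tinv (last x0 (AE e)).
Proof.
case: (orientP e) => e' d pe; have k_gt0 := kk_gt0 e'.
rewrite einv_orient !alpha_edge_orient // -nth0 -nth_last size_mkseq !nth_mkseq; try lia.
by case: d => /=; rewrite ?subn0 ?subnn.
Qed.

Lemma alpha_edge_chain (e : edg S) : chain (G := tgraph) (AE e).
Proof.
case: (orientP e) => e' d pe; have k_gt0 := kk_gt0 e'.
rewrite alpha_edge_orient //; apply/(@chain_nthP _ tgraph (e', 0, d)) => i.
rewrite size_mkseq => lt_i_k; rewrite !nth_mkseq; try lia.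
split; last by case: d.
rewrite /etgt /=; case: d => /=.
  rewrite (_ : (k e').-1 - i == 0 = false); last by apply/eqP; lia.
  rewrite (_ : ((k e').-1 - i.+1).+1 == k e' = false); last by apply/eqP; lia.
  by congr (inr (_, _)); lia.
by rewrite (_ : i.+1 == k e' = false) //; apply/eqP; lia.
Qed.

Lemma tsrc_inr e i (d : bool) v : tsrc (e, i, d) = inr v -> v = (e, i + d).
Proof. by case: d => /=; case: ifP => // _ [<-]; rewrite ?addn0 ?addn1. Qed.

(* Subdivision vertices have degree two. *)
Lemma tlink_uniq s t u v : tlink s u -> tlink t u -> tsrc u = inr v -> s = t.
Proof.
case: s t u => [[es i1] ds] [[et i2] dt] [[eu iu] du] [su nsu] [tu ntu] usrc.
have {}su : tsrc (es, i1, ~~ ds) = inr v by rewrite -usrc; exact: su.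
have {}tu : tsrc (et, i2, ~~ dt) = inr v by rewrite -usrc; exact: tu.
move: (tsrc_inr su) (tsrc_inr tu) (tsrc_inr usrc) => -> [? i2E] [? iuE]; subst et eu.
case: ds dt du i2E iuE nsu ntu {su tu usrc} => [] [] [] /= i2E iuE nsu ntu;
  first [ by congr (_, _, _); lia | by case: nsu; congr (_, _, _); lia
        | by case: ntu; congr (_, _, _); lia ].
Qed.

Lemma tinvK : involutive tinv.
Proof. by case=> [[e i] d]; rewrite /= negbK. Qed.

Lemma nth_alpha_edge_pos (t : triple) : ok t ->
  pos t < size (AE (parent t)) /\ nth t (AE (parent t)) (pos t) = t.
Proof.
case: t => [[e i] d] /andP[/= pe lt_i_k].
rewrite /parent /pos /= alpha_edge_orient // size_mkseq.
by case: d; rewrite nth_mkseq //=; try lia; split=> //; try lia; congr (_, _, _); lia.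
Qed.

Lemma tgt_inl_alpha_edge s w : ok s -> etgt (G := tgraph) s = inl w ->
  etgt (parent s) = w /\ exists pre, AE (parent s) = rcons pre s.
Proof.
move=> s_ok s_tgt.
have parentV : parent (tinv s) = einv (parent s).
  by case: s {s_ok s_tgt} => [[e i] d]; rewrite /parent einv_orient.
have tinv_ok : ok (tinv s) by case: s s_ok {s_tgt parentV} => [[]].
have [lt_pos nth_pos] := nth_alpha_edge_pos tinv_ok.
have pos0 : pos (tinv s) = 0.
  case: (posnP (pos (tinv s))) => // pos_gt0.
  have [v] := tsrc_nth_alpha_edge (tinv s) pos_gt0 lt_pos.
  by rewrite nth_pos; move: s_tgt; rewrite /etgt => /= ->.
rewrite pos0 nth0 parentV in nth_pos.
split.
  by move: s_tgt; rewrite /etgt /= -nth_pos tsrc_head_alpha_edge => -[<-].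
rewrite head_alpha_edge_einv in nth_pos.
case/lastP E: (AE (parent s)) (size_alpha_edge_gt0 (parent s)) => [//|pre a] _.
by exists pre; rewrite E last_rcons in nth_pos; rewrite -(tinvK a) nth_pos tinvK.
Qed.

Lemma alpha_edge_pred (x0 : triple) (e : edg S) p t : p.+1 < size (AE e) ->
  tlink t (nth x0 (AE e) p.+1) -> t = nth x0 (AE e) p.
Proof.
move=> lt_p tu; have [v uv] := tsrc_nth_alpha_edge x0 (ltn0Sn p) lt_p.
exact: tlink_uniq tu ((@chain_nthP _ tgraph x0 _).1 (alpha_edge_chain e) p lt_p) uv.
Qed.

Lemma tlink_alpha_edge (x0 : triple) (e f : edg S) :
  link e f -> tlink (last x0 (AE e)) (head x0 (AE f)).
Proof.
move=> [ef fe]; split.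
  change (tsrc (tinv (last x0 (AE e))) = tsrc (head x0 (AE f))).
  by rewrite -head_alpha_edge_einv !tsrc_head_alpha_edge -/(etgt e) ef.
change (head x0 (AE f) <> tinv (last x0 (AE e))).
rewrite -head_alpha_edge_einv => /(congr1 parent).
by rewrite -!nth0 !parent_nth_alpha_edge ?size_alpha_edge_gt0.
Qed.

Lemma alpha_path_cons (e : edg S) p :
  alpha_path alpha (e :: p) = AE e ++ alpha_path alpha p.
Proof. by []. Qed.

Lemma alpha_path_chain (p : seq (edg S)) :
  chain p -> chain (G := tgraph) (alpha_path alpha p).
Proof.
elim: p => [|e [|f p] IH] //.
  by move=> _; rewrite alpha_path_cons cats0; exact: alpha_edge_chain.
move=> /chain_cons2[ef fp]; have := tlink_alpha_edge (e, 0, false) ef.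
rewrite !alpha_path_cons.
case/lastP E: (AE e) (size_alpha_edge_gt0 e) => [//|pre a] _.
case E': (AE f) (size_alpha_edge_gt0 f) (IH fp) => [//|b post] _ bp.
rewrite last_rcons /= => ab; apply: chain_cat => //.
  by rewrite -E; exact: alpha_edge_chain.
by rewrite alpha_path_cons E' in bp.
Qed.

(* [take p] and [drop q] are the paper's [sigma0] and [sigmam]; the bounds on [p] and [q]
   say that they are proper subpaths. *)
Definition covers (L : seq triple) (e0 : edg S) (rest : seq (edg S)) (p q : nat) : Prop :=
  [/\ immersed (e0 :: rest), p < size (AE e0), 0 < q
    & take p (AE e0) ++ L ++ drop q (AE (last e0 rest)) = alpha_path alpha (e0 :: rest)].

Lemma covers_single s : ok s -> covers [:: s] (parent s) [::] (pos s) (pos s).+1.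
Proof.
move=> s_ok; have [lt_pos nth_pos] := nth_alpha_edge_pos s_ok.
split=> //; rewrite alpha_path_cons cats0.
by rewrite -[in RHS](cat_take_drop (pos s) (AE (parent s))) (drop_nth s lt_pos) nth_pos.
Qed.

Lemma covers_cons_start s u L e0 rest q : ok s -> tlink s u -> covers (u :: L) e0 rest 0 q ->
  exists p, covers [:: s, u & L] (parent s) (e0 :: rest) p q.
Proof.
move=> s_ok [su nsu] [[_ e0rest] _ q_gt0]; rewrite take0 cat0s alpha_path_cons => cover.
have u_head : u = head u (AE e0).
  by move: cover; case: (AE e0) (size_alpha_edge_gt0 e0) => [|a A] //= _ [].
have [tgt_s [pre pre_s]] :
    etgt (parent s) = esrc e0 /\ exists pre, AE (parent s) = rcons pre s.
  by apply: tgt_inl_alpha_edge => //; rewrite su u_head; exact: tsrc_head_alpha_edge.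
have e0_ninv : e0 <> einv (parent s).
  move=> e0V; apply: nsu; rewrite u_head e0V head_alpha_edge_einv pre_s last_rcons //.
exists (size pre); split=> //; first by rewrite pre_s size_rcons.
by rewrite !alpha_path_cons pre_s -cats1 take_size_cat // -cover -catA.
Qed.

Lemma covers_cons_interior s u L e0 rest p q : tlink s u ->
  covers (u :: L) e0 rest p.+1 q -> covers [:: s, u & L] e0 rest p q.
Proof.
move=> su [imm lt_p q_gt0 cover].
have u_nth : u = nth u (AE e0) p.+1.
  have := congr1 (nth u ^~ p.+1) cover.
  by rewrite nth_cat size_take lt_p ltnn subnn /= nth_cat lt_p.
have s_nth : s = nth u (AE e0) p by apply: alpha_edge_pred; rewrite -?u_nth.
split=> //; first exact: ltnW.
by rewrite -cover (take_nth u (ltnW lt_p)) -s_nth cat_rcons.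
Qed.

Lemma covers_exists L : L <> [::] -> chain (G := tgraph) L -> all ok L ->
  exists e0 rest p q, covers L e0 rest p q.
Proof.
elim: L => [|s [|u L] IH] // _.
  move=> _ /andP[s_ok _].
  by exists (parent s), [::], (pos s), (pos s).+1; exact: covers_single.
move=> /chain_cons2[su uL] /andP[s_ok L_ok].
have [//|e0 [rest [[|p] [q cover]]]] := IH _ uL L_ok.
  have [p' cover'] := covers_cons_start s_ok su cover.
  by exists (parent s), (e0 :: rest), p', q.
by exists e0, rest, p, q; exact: covers_cons_interior su cover.
Qed.

Lemma chain_val (p : seq (aedge alpha S)) :
  chain (G := tgraph) (map val p) <-> chain (G := alphaG alpha S) p.
Proof.
apply: (@chain_map B (alphaG alpha S) tgraph val (fun v => v)) => //.
  exact: val_inj.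
by case=> [[[e i] d] ?].
Qed.

Lemma map_val_pmap_insub (l : seq triple) :
  all ok l -> map val (pmap insub l : seq (aedge alpha S)) = l.
Proof.
by move=> l_ok; rewrite (pmap_filter (insubK _)) (eq_filter (isSome_insub _)); exact/all_filterP.
Qed.

End Subdivision.

Theorem lemma9p3 (B : finType) (S : lgraph B) (alpha : FG B -> FG B)
  (hS : is_lgraph S) (halpha : is_aut alpha)
  (sigma : seq (edg (alphaG alpha S)))
  (hsigma : immersed sigma) :
  exists (e0 : edg S) (rest : seq (edg S))
         (sigma0 sigmam : seq (edg (alphaG alpha S))),
    immersed (e0 :: rest) /\
        (exists tau, [seq proj1_sig x | x <- sigma0] ++ tau = alpha_edge alpha e0) /\
        [seq proj1_sig x | x <- sigma0] <> alpha_edge alpha e0 /\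
        (exists tau, tau ++ [seq proj1_sig x | x <- sigmam]
                     = alpha_edge alpha (last e0 rest)) /\
        [seq proj1_sig x | x <- sigmam] <> alpha_edge alpha (last e0 rest) /\
        [seq proj1_sig x | x <- sigma0 ++ sigma ++ sigmam]
          = alpha_path alpha (e0 :: rest) /\
    immersed (sigma0 ++ sigma ++ sigmam).
Proof.
have kk_gt0 (e : edg S) : 0 < kk alpha e by exact: size_aword_gt0.
case: hsigma => sigma_nil sigma_chain.
have [|||e0 [rest [p [q [imm lt_p q_gt0 cover]]]]] :=
  covers_exists hS kk_gt0 (L := map val sigma).
- by case: (sigma) sigma_nil.
- exact/chain_val.
- by elim: (sigma) => //= x s ->; rewrite andbT; exact: valP.
have A0_ok := all_take p (alpha_edge_ok hS kk_gt0 e0).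
have Am_ok := all_drop q (alpha_edge_ok hS kk_gt0 (last e0 rest)).
have Am_gt0 := size_alpha_edge_gt0 hS kk_gt0 (last e0 rest).
set A0 := alpha_edge alpha e0 in lt_p cover A0_ok *.
set Am := alpha_edge alpha (last e0 rest) in cover Am_ok Am_gt0 *.
exists e0, rest, (pmap insub (take p A0)), (pmap insub (drop q Am)).
rewrite -/A0 -/Am !map_cat !map_val_pmap_insub //; split=> //.
split; first by exists (drop p A0); rewrite cat_take_drop.
split; first by move/(congr1 size); rewrite size_take lt_p; lia.
split; first by exists (take q Am); rewrite cat_take_drop.
split; first by move/(congr1 size); rewrite size_drop; lia.
split; first exact: cover.
split; first by move/(congr1 size); rewrite !size_cat; case: (sigma) sigma_nil => //= *; lia.
apply/chain_val; rewrite !map_cat !map_val_pmap_insub // cover.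
exact: alpha_path_chain imm.2.
Qed.
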